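(* Let $\mathcal{H}_k$ be a truncated space with orthonormal basis $f_m(z)=(1+b_mz)z^m$, $m\ge0$, where $b_t=0$ for all $t\ge n$; let $U:\mathcal{H}_k\to H^2(\mathbb{D})$ be the unitary with $Uf_m=z^m$ for all $m\ge0$, and let $S_n = UM_zU^*$ be the $n$-shift corresponding to $k$. Let $X$ be a bounded operator on $H^2(\mathbb{D})$. Then $XS_n = S_nX$ if and only if there exists $\varphi=\sum_{m\ge0}\alpha_m z^m \in H^\infty(\mathbb{D})$ such that $X = T_\varphi + N$, where $T_\varphi$ is the analytic Toeplitz operator with symbol $\varphi$ on $H^2(\mathbb{D})$ and $N$ is the operator on $H^2(\mathbb{D})$ whose matrix with respect to $\{z^m\}_{m\ge0}$ has entries \[\langle N z^m, z^j\rangle = \langle \varphi f_m, f_j\rangle_{\mathcal{H}_k} - \alpha_{j-m}\qquad (j,m\ge 0),\] with the convention $\alpha_{l}=0$ for $l<0$. (Explicitly, the columns $m\ge n$ of this matrix vanish, its entries with $j\le m+1$ vanish, and for $0\le m<n$ and $j>n$ the entry equals $(b_m-b_{j-1})\alpha_{j-m-1}$.)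
   Context: Fix $n \ge 1$. $H^2(\mathbb{D})$ is the Hardy space on the open unit disc and $H^\infty(\mathbb{D})$ the bounded analytic functions. A truncated space is a reproducing kernel Hilbert space $\mathcal{H}_k$ of analytic functions on $\mathbb{D}$ (with scalar analytic kernel $k$) such that: $\mathbb{C}[z]\subseteq\mathcal{H}_k$; the multiplication operator $M_z$ is bounded on $\mathcal{H}_k$; and the functions $f_m(z) = (1 + b_m z)z^m$, $m \ge 0$, form an orthonormal basis of $\mathcal{H}_k$, for scalars $\{b_m\}$ with $b_t = 0$ for $t \ge n$. For $\varphi\in H^\infty(\mathbb{D})$, $\varphi f_m\in\mathcal{H}_k$, so the inner products above make sense. *)

From Stdlib Require Import Reals Arith.
From Coquelicot Require Import Coquelicot.

Open Scope R_scope.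

(** H^2(D) is modelled by Taylor coefficient sequences: g(z) = sum_m g_m z^m,
    so H^2(D) = l^2(N, C) and z^m corresponds to the basis vector [ev m]. *)
Definition seqC := nat -> C.

Definition is_l2 (a : seqC) : Prop := ex_series (fun m => (Cmod (a m)) ^ 2).

Definition l2norm (a : seqC) : R := sqrt (Series (fun m => (Cmod (a m)) ^ 2)).

(** Operators on H^2: maps on coefficient sequences; only their behaviour on
    l^2 is relevant. *)
Definition op := seqC -> seqC.

Definition bounded_op (X : op) : Prop :=
  (forall a, is_l2 a -> is_l2 (X a)) /\
  (forall (a c : seqC) (l : C), is_l2 a -> is_l2 c ->
      X (fun m => Cplus (a m) (Cmult l (c m))) =
      (fun m => Cplus (X a m) (Cmult l (X c m)))) /\
  (exists M : R, forall a, is_l2 a -> l2norm (X a) <= M * l2norm a).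

Definition ev (m : nat) : seqC := fun j => if Nat.eqb j m then RtoC 1 else RtoC 0.

(** Taylor coefficients of f_m(z) = (1 + b_m z) z^m. *)
Definition fpoly (b : seqC) (m : nat) : seqC :=
  fun p => if Nat.eqb p m then RtoC 1
           else if Nat.eqb p (S m) then b m else RtoC 0.

(** U^* : H^2 -> H_k, z^m |-> f_m : the Taylor coefficients of sum_m c_m f_m. *)
Definition Ustar (b : seqC) (c : seqC) : seqC :=
  fun p => match p with
           | O => c O
           | S q => Cplus (c (S q)) (Cmult (b q) (c q))
           end.

(** Coordinates of a function g (given by its Taylor coefficients) in the
    orthonormal basis {f_m} of H_k, i.e. fcoord b g j = <g, f_j>_{H_k}.
    These are the unique c with g = sum_j c_j f_j. *)
Fixpoint fcoord (b g : seqC) (p : nat) : C :=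
  match p with
  | O => g O
  | S q => Cminus (g (S q)) (Cmult (b q) (fcoord b g q))
  end.

Definition Uop (b : seqC) (g : seqC) : seqC := fcoord b g.

Definition Mz (g : seqC) : seqC :=
  fun p => match p with O => RtoC 0 | S q => g q end.

Definition Sshift (b : seqC) : op := fun a => Uop b (Mz (Ustar b a)).

Definition cauchy_prod (alpha g : seqC) : seqC :=
  fun j => sum_n (fun i => Cmult (alpha (j - i)%nat) (g i)) j.

Definition toeplitz (alpha : seqC) : op := fun a => cauchy_prod alpha a.

Definition Hinf (alpha : seqC) : Prop :=
  exists M : R, forall z : C, Cmod z < 1 ->
    exists s : C, is_series (fun m => Cmult (alpha m) (pow_n z m)) s /\ Cmod s <= M.

Definition alpha_idx (alpha : seqC) (j m : nat) : C :=
  if Nat.leb m j then alpha (j - m)%nat else RtoC 0.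

From Stdlib Require Import Reals Arith Lia Lra FunctionalExtensionality.
From Coquelicot Require Import Coquelicot.

(* Conjugation by U turns S_n into M_z on H_k, so U M_phi U^* commutes with S_n for every
   symbol phi.  All operators involved are lower triangular in the basis {z^m}, hence a bounded
   operator is determined by its values on that basis.  If X commutes with S_n, its values on
   U z^k = S_n^k U 1 force X = U M_phi U^* with phi = U^* X U 1, and N = U M_phi U^* - T_phi
   has nonzero columns only for m < n, so it is bounded.  Finally evaluation of U^* v at a point
   z of the disc is a bounded functional of v which turns U^* X U into multiplication by phi(z),
   so |phi(z)|^k = |(U^* X^k U 1)(z)| <= C |X|^k for all k and |phi(z)| <= |X|. *)

Fixpoint csum (F : nat -> C) (k : nat) : C :=
  match k with O => RtoC 0 | S k => Cplus (csum F k) (F k) end.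

Lemma sum_n_csum (F : nat -> C) j : sum_n F j = csum F (S j).
Proof.
  induction j; simpl.
  - rewrite sum_O. ring.
  - rewrite sum_Sn, IHj. reflexivity.
Qed.

Lemma csum_ext (F G : nat -> C) k :
  (forall i, (i < k)%nat -> F i = G i) -> csum F k = csum G k.
Proof.
  induction k; intros H; simpl; auto.
  rewrite IHk by (intros; apply H; lia). rewrite H by lia. reflexivity.
Qed.

Lemma csum_lin (F G : nat -> C) l k :
  csum (fun i => Cplus (F i) (Cmult l (G i))) k = Cplus (csum F k) (Cmult l (csum G k)).
Proof. induction k; simpl; [ring|]. rewrite IHk. ring. Qed.

Lemma csum_shift (F : nat -> C) k :
  csum F (S k) = Cplus (F O) (csum (fun i => F (S i)) k).
Proof. induction k; simpl in *; [ring|]. rewrite IHk. ring. Qed.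

Lemma csum_ev (F : nat -> C) m k :
  csum (fun i => Cmult (F i) (ev m i)) k = if Nat.ltb m k then F m else RtoC 0.
Proof.
  induction k; simpl; [reflexivity|].
  rewrite IHk. unfold ev.
  destruct (Nat.ltb_spec m k), (Nat.ltb_spec m (S k)), (Nat.eqb_spec k m);
    try lia; subst; ring.
Qed.

Lemma csum_zero_tail (F : nat -> C) n K :
  (forall m, (n <= m)%nat -> F m = RtoC 0) -> (n <= K)%nat -> csum F K = csum F n.
Proof.
  intros H HK. induction HK; auto. simpl. rewrite IHHK, H by lia. ring.
Qed.

Fixpoint rsum (F : nat -> R) (k : nat) : R :=
  match k with O => 0 | S k => rsum F k + F k end.

Lemma rsum_ge0 F k : (forall i, 0 <= F i) -> 0 <= rsum F k.
Proof. intros H; induction k; simpl; [lra|]. specialize (H k). lra. Qed.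

Lemma rsum_ge_term F k i : (forall i, 0 <= F i) -> (i < k)%nat -> F i <= rsum F k.
Proof.
  intros H Hi. induction k; [lia|]. simpl. destruct (Nat.eq_dec i k).
  - subst. pose proof (rsum_ge0 F k H). lra.
  - assert (F i <= rsum F k) by (apply IHk; lia). specialize (H k). lra.
Qed.

Lemma Cmod_csum_le (F : nat -> C) k : Cmod (csum F k) <= rsum (fun i => Cmod (F i)) k.
Proof.
  induction k; simpl.
  - rewrite Cmod_0. lra.
  - eapply Rle_trans; [apply Cmod_triangle|]. lra.
Qed.

Lemma rsum_Cmod_mult_le (a d : nat -> C) c k : (forall m, Cmod (a m) <= c) ->
  rsum (fun m => Cmod (Cmult (a m) (d m))) k <= c * rsum (fun m => Cmod (d m)) k.
Proof.
  intros H. induction k; simpl; [lra|]. rewrite Cmod_mult.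
  pose proof (H k). pose proof (Cmod_ge_0 (d k)). nra.
Qed.

Lemma cauchy_lin alpha g h l j :
  cauchy_prod alpha (fun p => Cplus (g p) (Cmult l (h p))) j
  = Cplus (cauchy_prod alpha g j) (Cmult l (cauchy_prod alpha h j)).
Proof.
  unfold cauchy_prod. rewrite !sum_n_csum, <- csum_lin.
  apply csum_ext. intros. ring.
Qed.

Lemma cauchy_ev alpha m j : cauchy_prod alpha (ev m) j = alpha_idx alpha j m.
Proof.
  unfold cauchy_prod. rewrite sum_n_csum, (csum_ev (fun i => alpha (j - i)%nat)).
  unfold alpha_idx. destruct (Nat.ltb_spec m (S j)), (Nat.leb_spec m j); auto; lia.
Qed.

Lemma cauchy_Mz alpha g j : cauchy_prod alpha (Mz g) j = Mz (cauchy_prod alpha g) j.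
Proof.
  unfold cauchy_prod. destruct j; simpl.
  - rewrite sum_O. simpl. ring.
  - rewrite !sum_n_csum, (csum_shift _ (S j)). simpl.
    rewrite Cmult_0_r, Cplus_0_l. reflexivity.
Qed.

Definition agree_upto (j : nat) (g h : seqC) : Prop :=
  forall i, (i <= j)%nat -> g i = h i.

Definition lower_triangular (Z : op) : Prop :=
  forall j v w, agree_upto j v w -> Z v j = Z w j.

Definition linear_on_l2 (Z : op) : Prop :=
  forall g h l j, is_l2 g -> is_l2 h ->
    Z (fun p => Cplus (g p) (Cmult l (h p))) j = Cplus (Z g j) (Cmult l (Z h j)).

Lemma cauchy_agree alpha j g h :
  agree_upto j g h -> agree_upto j (cauchy_prod alpha g) (cauchy_prod alpha h).
Proof.
  intros H i Hi. apply sum_n_ext_loc. intros k Hk. rewrite H by lia. reflexivity.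
Qed.

Lemma toeplitz_lower_triangular alpha : lower_triangular (toeplitz alpha).
Proof. intros j v w H. apply (cauchy_agree alpha j v w H). lia. Qed.

Section Model.
Variable b : nat -> C.

Lemma fcoord_Ustar c : fcoord b (Ustar b c) = c.
Proof.
  apply functional_extensionality. intro p. induction p; simpl; auto.
  rewrite IHp. unfold Cminus. ring.
Qed.

Lemma Ustar_fcoord g : Ustar b (fcoord b g) = g.
Proof.
  apply functional_extensionality. intros [|p]; simpl; auto. unfold Cminus. ring.
Qed.

Lemma fcoord_lin g h l q :
  fcoord b (fun p => Cplus (g p) (Cmult l (h p))) q
  = Cplus (fcoord b g q) (Cmult l (fcoord b h q)).
Proof. induction q; simpl; auto. rewrite IHq. unfold Cminus. ring. Qed.

Lemma Ustar_lin g h l q :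
  Ustar b (fun p => Cplus (g p) (Cmult l (h p))) q
  = Cplus (Ustar b g q) (Cmult l (Ustar b h q)).
Proof. destruct q; simpl; auto. ring. Qed.

Lemma Ustar_sub g h k j : (forall i, g i = Cplus (h i) (k i)) ->
  Ustar b h j = Cminus (Ustar b g j) (Ustar b k j).
Proof. intros H. destruct j; simpl; rewrite !H; unfold Cminus; ring. Qed.

Lemma Ustar_ev m : Ustar b (ev m) = fpoly b m.
Proof.
  apply functional_extensionality. intros [|p]; unfold Ustar, ev, fpoly.
  - destruct (Nat.eqb_spec 0 m), (Nat.eqb_spec 0 (S m)); auto; lia.
  - destruct (Nat.eqb_spec (S p) m), (Nat.eqb_spec p m), (Nat.eqb_spec (S p) (S m));
      try lia; subst; ring.
Qed.

Lemma fcoord_agree j g h : agree_upto j g h -> agree_upto j (fcoord b g) (fcoord b h).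
Proof.
  induction j; intros H i Hi.
  - replace i with O by lia. apply H. lia.
  - destruct (Nat.eq_dec i (S j)) as [->|].
    + simpl. rewrite (H (S j)), (IHj (fun k Hk => H k (le_S _ _ Hk)) j) by lia.
      reflexivity.
    + apply IHj; [intros k Hk; apply H|]; lia.
Qed.

Lemma Ustar_agree j g h : agree_upto j g h -> agree_upto j (Ustar b g) (Ustar b h).
Proof. intros H [|i] Hi; simpl; rewrite ?H by lia; reflexivity. Qed.

(** [mult_k alpha] is [U M_phi U^*], multiplication by [phi = sum_m alpha_m z^m] on [H_k]
    carried over to [H^2]. *)
Definition mult_k (alpha : seqC) : op := fun v => fcoord b (cauchy_prod alpha (Ustar b v)).

Lemma mult_k_lin alpha g h l j :
  mult_k alpha (fun p => Cplus (g p) (Cmult l (h p))) j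
  = Cplus (mult_k alpha g j) (Cmult l (mult_k alpha h j)).
Proof.
  unfold mult_k. rewrite <- fcoord_lin. f_equal.
  apply functional_extensionality. intro i. rewrite <- cauchy_lin. f_equal.
  apply functional_extensionality. intro p. apply Ustar_lin.
Qed.

Lemma mult_k_lower_triangular alpha : lower_triangular (mult_k alpha).
Proof.
  intros j v w H. apply (fcoord_agree j); [|lia].
  apply cauchy_agree, Ustar_agree, H.
Qed.

Lemma mult_k_Sshift alpha v : mult_k alpha (Sshift b v) = Sshift b (mult_k alpha v).
Proof.
  unfold mult_k, Sshift, Uop. rewrite !Ustar_fcoord. f_equal.
  apply functional_extensionality. intro j. apply cauchy_Mz.
Qed.

Lemma mult_k_ev alpha m j :
  mult_k alpha (ev m) j = fcoord b (cauchy_prod alpha (fpoly b m)) j.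
Proof. unfold mult_k. rewrite Ustar_ev. reflexivity. Qed.

Lemma Ustar_mult_k alpha v : Ustar b (mult_k alpha v) = cauchy_prod alpha (Ustar b v).
Proof. apply Ustar_fcoord. Qed.

Lemma fcoord_ev_S k : fcoord b (ev (S k)) = Sshift b (fcoord b (ev k)).
Proof.
  unfold Sshift, Uop. rewrite Ustar_fcoord. f_equal.
  apply functional_extensionality. intros [|p]; reflexivity.
Qed.

(** [z^m = U f_m], and [f_m = z^m + b_m z^(m+1)] in [H_k]. *)
Lemma ev_fcoord_decomp m :
  ev m = (fun p => Cplus (fcoord b (ev m) p) (Cmult (b m) (fcoord b (ev (S m)) p))).
Proof.
  apply functional_extensionality. intros p. rewrite <- fcoord_lin.
  transitivity (fcoord b (Ustar b (ev m)) p); [now rewrite fcoord_Ustar|].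
  rewrite Ustar_ev. f_equal.
  apply functional_extensionality. intros q. unfold fpoly, ev.
  destruct (Nat.eqb_spec q m), (Nat.eqb_spec q (S m)); try lia; subst; ring.
Qed.

End Model.

Definition is_l2R (f : nat -> R) : Prop := ex_series (fun j => f j ^ 2).

Lemma ex_series_R0 : ex_series (fun _ : nat => 0).
Proof.
  apply (ex_series_ext (fun k => scal 0 ((1/2) ^ k))).
  - intros k. unfold scal; simpl. unfold mult; simpl. ring.
  - apply (@ex_series_scal R_AbsRing R_NormedModule), ex_series_geom.
    rewrite Rabs_right; lra.
Qed.

Lemma is_l2R_le (f g : nat -> R) c :
  (forall j, f j ^ 2 <= c * g j ^ 2) -> is_l2R g -> is_l2R f.
Proof.
  intros H Hg. apply (@ex_series_le R_AbsRing R_CompleteNormedModule _ (fun j => c * g j ^ 2)).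
  - intros j. change norm with Rabs. rewrite Rabs_right by (apply Rle_ge, pow2_ge_0). apply H.
  - apply (@ex_series_scal R_AbsRing R_NormedModule), Hg.
Qed.

Lemma is_l2R_plus (f g : nat -> R) : is_l2R f -> is_l2R g -> is_l2R (fun j => f j + g j).
Proof.
  intros Hf Hg.
  apply (@ex_series_le R_AbsRing R_CompleteNormedModule _ (fun j => 2 * f j ^ 2 + 2 * g j ^ 2)).
  - intros j. change norm with Rabs. rewrite Rabs_right by (apply Rle_ge, pow2_ge_0).
    pose proof (pow2_ge_0 (f j - g j)). nra.
  - apply (@ex_series_plus R_AbsRing R_NormedModule);
      apply (@ex_series_scal R_AbsRing R_NormedModule); assumption.
Qed.

Lemma is_l2R_rsum (F : nat -> nat -> R) k :
  (forall m, is_l2R (F m)) -> is_l2R (fun j => rsum (fun m => F m j) k).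
Proof.
  intros H. induction k; simpl.
  - apply (ex_series_ext (fun _ => 0)); [intros; simpl; ring|apply ex_series_R0].
  - apply (is_l2R_plus (fun j => rsum (fun m => F m j) k) (F k)); auto.
Qed.

Lemma l2_ext u v : (forall j, u j = v j) -> is_l2 u -> is_l2 v.
Proof. intros H. apply ex_series_ext. intros j. rewrite H. reflexivity. Qed.

Lemma l2_lin u v l : is_l2 u -> is_l2 v -> is_l2 (fun j => Cplus (u j) (Cmult l (v j))).
Proof.
  intros Hu Hv.
  apply (is_l2R_le _ (fun j => Cmod (u j) + Cmod l * Cmod (v j)) 1).
  - intros j. pose proof (Cmod_triangle (u j) (Cmult l (v j))) as Ht.
    rewrite Cmod_mult in Ht. pose proof (Cmod_ge_0 (Cplus (u j) (Cmult l (v j)))). nra.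
  - apply is_l2R_plus; auto.
    apply (is_l2R_le _ (fun j => Cmod (v j)) (Cmod l ^ 2)); [intros j; right; ring|exact Hv].
Qed.

Lemma l2_zero_tail u L : (forall j, (L <= j)%nat -> u j = RtoC 0) -> is_l2 u.
Proof.
  intros H. apply (ex_series_incr_n _ L).
  apply (ex_series_ext (fun _ => 0)); [|apply ex_series_R0].
  intros k. rewrite H by lia. rewrite Cmod_0. simpl. ring.
Qed.

Lemma l2_eventually_eq u v L : (forall j, (L <= j)%nat -> u j = v j) -> is_l2 v -> is_l2 u.
Proof.
  intros H Hv.
  apply (l2_ext (fun j => Cplus (v j) (Cmult (RtoC 1) (Cminus (u j) (v j)))));
    [intros; unfold Cminus; ring|].
  apply l2_lin; auto. apply (l2_zero_tail _ L).
  intros j Hj. rewrite H by auto. unfold Cminus. ring.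
Qed.

Lemma l2_Mz v : is_l2 v -> is_l2 (Mz v).
Proof. intros H. apply ex_series_incr_1. exact H. Qed.

Lemma l2_ev m : is_l2 (ev m).
Proof.
  apply (l2_zero_tail _ (S m)). intros j Hj. unfold ev.
  destruct (Nat.eqb_spec j m); [lia|reflexivity].
Qed.

Lemma l2_alpha_idx alpha m : is_l2 alpha -> is_l2 (fun j => alpha_idx alpha j m).
Proof.
  intros Ha. induction m.
  - apply (l2_ext alpha); auto. intros j. unfold alpha_idx. simpl. now rewrite Nat.sub_0_r.
  - apply (l2_ext (Mz (fun j => alpha_idx alpha j m))); [|apply l2_Mz; auto].
    intros [|j]; reflexivity.
Qed.

Lemma l2norm_ge0 v : 0 <= l2norm v.
Proof. apply sqrt_pos. Qed.

Lemma Series_ge_term (f : nat -> R) j :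
  (forall k, 0 <= f k) -> ex_series f -> f j <= Series f.
Proof.
  intros H He. apply Rle_trans with (sum_n f j).
  - destruct j; [rewrite sum_O; lra|].
    rewrite sum_Sn. change plus with Rplus. cbv beta.
    assert (0 <= sum_n f j); [|lra].
    clear He. induction j; [rewrite sum_O; apply H|].
    rewrite sum_Sn. change plus with Rplus. specialize (H (S j)). lra.
  - apply (is_lim_seq_incr_compare (sum_n f)); [apply Series_correct, He|].
    intros k. rewrite sum_Sn. change plus with Rplus. specialize (H (S k)). lra.
Qed.

Lemma coord_le_l2norm v j : is_l2 v -> Cmod (v j) <= l2norm v.
Proof.
  intros H. unfold l2norm. rewrite <- (sqrt_pow2 (Cmod (v j))) by apply Cmod_ge_0.
  apply sqrt_le_1_alt, (Series_ge_term (fun m => Cmod (v m) ^ 2)); auto.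
  intros; apply pow2_ge_0.
Qed.

Lemma l2norm_le_pointwise u (f : nat -> R) c :
  (forall j, Cmod (u j) <= c * f j) -> 0 <= c -> (forall j, 0 <= f j) -> is_l2R f ->
  is_l2 u /\ l2norm u <= c * sqrt (Series (fun j => f j ^ 2)).
Proof.
  intros H Hc Hf Hr.
  assert (Hle : forall j, Cmod (u j) ^ 2 <= c ^ 2 * f j ^ 2).
  { intros j. specialize (H j). pose proof (Cmod_ge_0 (u j)). specialize (Hf j). nra. }
  split; [apply (is_l2R_le (fun j => Cmod (u j)) f (c ^ 2)); auto|].
  assert (0 <= Series (fun j => f j ^ 2)).
  { apply Rle_trans with (f O ^ 2); [apply pow2_ge_0|].
    apply (Series_ge_term (fun j => f j ^ 2)); auto. intros; apply pow2_ge_0. }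
  unfold l2norm. rewrite <- (sqrt_pow2 c), <- sqrt_mult by (auto; apply pow2_ge_0).
  apply sqrt_le_1_alt. rewrite <- Series_scal_l.
  apply Series_le; [intros j; split; [apply pow2_ge_0|apply Hle]|].
  apply (@ex_series_scal R_AbsRing R_NormedModule), Hr.
Qed.

Definition trunc (K : nat) (w : seqC) : seqC :=
  fun j => if Nat.ltb j K then w j else RtoC 0.

Definition tail (K : nat) (w : seqC) : seqC :=
  fun j => if Nat.ltb j K then RtoC 0 else w j.

Lemma trunc_S K w :
  trunc (S K) w = (fun p => Cplus (trunc K w p) (Cmult (w K) (ev K p))).
Proof.
  apply functional_extensionality. intros j. unfold trunc, ev.
  destruct (Nat.ltb_spec j (S K)), (Nat.ltb_spec j K), (Nat.eqb_spec j K);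
    try lia; subst; ring.
Qed.

Lemma trunc_agree K w j : (j < K)%nat -> agree_upto j (trunc K w) w.
Proof. intros H i Hi. unfold trunc. destruct (Nat.ltb_spec i K); auto; lia. Qed.

Lemma trunc_add_tail K w j : w j = Cplus (trunc K w j) (tail K w j).
Proof. unfold trunc, tail. destruct (Nat.ltb j K); ring. Qed.

Lemma l2_trunc K w : is_l2 (trunc K w).
Proof.
  apply (l2_zero_tail _ K). intros j Hj. unfold trunc.
  destruct (Nat.ltb_spec j K); [lia|reflexivity].
Qed.

Lemma l2_tail K w : is_l2 w -> is_l2 (tail K w).
Proof.
  apply (l2_eventually_eq _ _ K). intros j Hj. unfold tail.
  destruct (Nat.ltb_spec j K); [lia|reflexivity].
Qed.

Lemma l2norm_tail_small w : is_l2 w -> forall eps, 0 < eps ->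
  forall K0, exists K, (K0 <= K)%nat /\ l2norm (tail K w) <= eps.
Proof.
  intros Hw eps He K0.
  set (f := fun m => Cmod (w m) ^ 2).
  assert (Hl : is_lim_seq (sum_n f) (Series f)) by exact (Series_correct f Hw).
  apply is_lim_seq_spec in Hl.
  destruct (Hl (mkposreal (eps ^ 2) ltac:(apply pow_lt; auto))) as [N HN].
  set (K := S (max K0 N)). exists K. split; [unfold K; lia|].
  unfold l2norm. rewrite <- (sqrt_pow2 eps) by lra. apply sqrt_le_1_alt.
  rewrite (Series_incr_n_aux _ K).
  2:{ intros k Hk. unfold tail. destruct (Nat.ltb_spec k K); [|lia].
      rewrite Cmod_0. simpl. ring. }
  rewrite (Series_ext _ (fun k => f (K + k)%nat)).
  2:{ intros k. unfold tail, f. destruct (Nat.ltb_spec (K + k) K); [lia|reflexivity]. }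
  assert (Hs := Series_incr_n f K ltac:(unfold K; lia) Hw).
  specialize (HN (max K0 N) ltac:(lia)). simpl in HN.
  rewrite sum_n_Reals in HN. unfold K in Hs. simpl pred in Hs.
  apply Rabs_lt_between in HN. unfold K. simpl pow. lra.
Qed.

Lemma eq0_of_le_l2norm_tail (x : C) A w K0 : is_l2 w -> 0 <= A ->
  (forall K, (K0 <= K)%nat -> Cmod x <= A * l2norm (tail K w)) -> x = RtoC 0.
Proof.
  intros Hw HA H. apply Cmod_eq_0. pose proof (Cmod_ge_0 x).
  destruct (Req_dec (Cmod x) 0) as [|Hne]; auto. exfalso.
  set (eps := Cmod x / (2 * (A + 1))).
  assert (Heps : 0 < eps) by (apply Rdiv_lt_0_compat; lra).
  destruct (l2norm_tail_small w Hw eps Heps K0) as [K [HK Ht]].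
  specialize (H K HK).
  assert (A * eps < Cmod x).
  { unfold eps, Rdiv. apply (Rmult_lt_reg_r (2 * (A + 1))); [lra|].
    rewrite !Rmult_assoc, Rinv_l by lra. nra. }
  pose proof (Rmult_le_compat_l A _ _ HA Ht). lra.
Qed.

Lemma bounded_op_l2 X : bounded_op X -> forall a, is_l2 a -> is_l2 (X a).
Proof. intros [H _]. exact H. Qed.

Lemma bounded_op_linear_on_l2 X : bounded_op X -> linear_on_l2 X.
Proof. intros [_ [H _]] g h l j Hg Hh. rewrite H; auto. Qed.

Lemma bounded_op_norm X : bounded_op X ->
  exists M, 0 <= M /\ forall a, is_l2 a -> l2norm (X a) <= M * l2norm a.
Proof.
  intros [_ [_ [M HM]]]. exists (Rabs M). split; [apply Rabs_pos|].
  intros a Ha. eapply Rle_trans; [apply HM; auto|].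
  apply Rmult_le_compat_r; [apply l2norm_ge0|apply RRle_abs].
Qed.

Lemma linear_on_l2_zero Z j : linear_on_l2 Z -> Z (fun _ => RtoC 0) j = RtoC 0.
Proof.
  intros H. assert (Hz : is_l2 (fun _ : nat => RtoC 0)) by (apply (l2_zero_tail _ O); auto).
  assert (E := H _ _ (RtoC 1) j Hz Hz). cbv beta in E.
  replace (fun _ : nat => Cplus (RtoC 0) (Cmult (RtoC 1) (RtoC 0))) with (fun _ : nat => RtoC 0)
    in E by (apply functional_extensionality; intros; ring).
  set (z0 := Z (fun _ => RtoC 0) j) in *.
  replace z0 with (Cminus (Cplus z0 (Cmult (RtoC 1) z0)) z0) by (unfold Cminus; ring).
  rewrite <- E. unfold Cminus. ring.
Qed.

Lemma linear_on_l2_trunc Z K w j : linear_on_l2 Z ->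
  Z (trunc K w) j = csum (fun m => Cmult (w m) (Z (ev m) j)) K.
Proof.
  intros H. induction K.
  - apply linear_on_l2_zero, H.
  - rewrite trunc_S, H by (apply l2_trunc || apply l2_ev). rewrite IHK. reflexivity.
Qed.

Lemma bounded_op_trunc_add_tail X K w j : bounded_op X -> is_l2 w ->
  X w j = Cplus (X (trunc K w) j) (X (tail K w) j).
Proof.
  intros HX Hw.
  replace w with (fun p => Cplus (trunc K w p) (Cmult (RtoC 1) (tail K w p))) at 1
    by (apply functional_extensionality; intros p; rewrite (trunc_add_tail K w p); ring).
  rewrite (bounded_op_linear_on_l2 X HX) by (apply l2_trunc || apply l2_tail; auto). ring.
Qed.

(** Truncations of [w] are dense, and a lower triangular [Z] sees only the truncation. *)
Lemma bounded_op_eq_lower_triangular X Z :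
  bounded_op X -> linear_on_l2 Z -> lower_triangular Z ->
  (forall m, X (ev m) = Z (ev m)) -> forall w, is_l2 w -> X w = Z w.
Proof.
  intros HX HZ HZl Hev w Hw. apply functional_extensionality. intro j.
  destruct (bounded_op_norm X HX) as [M [HM0 HM]].
  enough (Cminus (X w j) (Z w j) = RtoC 0) as Hd.
  { transitivity (Cplus (Cminus (X w j) (Z w j)) (Z w j)); [unfold Cminus; ring|].
    rewrite Hd. ring. }
  apply (eq0_of_le_l2norm_tail _ M w (S j) Hw HM0). intros K HK.
  assert (Htrunc : X (trunc K w) j = Z w j).
  { rewrite (linear_on_l2_trunc X) by (apply bounded_op_linear_on_l2, HX).
    rewrite (csum_ext _ (fun m => Cmult (w m) (Z (ev m) j))) by (intros; rewrite Hev; reflexivity).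
    rewrite <- (linear_on_l2_trunc Z K w j HZ). apply HZl, trunc_agree. lia. }
  rewrite (bounded_op_trunc_add_tail X K w j HX Hw), Htrunc.
  replace (Cminus _ _) with (X (tail K w) j) by (unfold Cminus; ring).
  apply Rle_trans with (l2norm (X (tail K w))).
  - apply coord_le_l2norm, bounded_op_l2, l2_tail; auto.
  - apply HM, l2_tail, Hw.
Qed.

Section Truncated.
Variable n : nat.
Variable b : nat -> C.
Hypothesis hb : forall t : nat, (n <= t)%nat -> b t = RtoC 0.

Lemma b_bounded : exists B, 0 <= B /\ forall t, Cmod (b t) <= B.
Proof.
  exists (rsum (fun t => Cmod (b t)) n).
  assert (H0 : forall t, 0 <= Cmod (b t)) by (intros; apply Cmod_ge_0).
  split; [apply rsum_ge0, H0|]. intros t.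
  destruct (Nat.lt_ge_cases t n).
  - apply (rsum_ge_term (fun t => Cmod (b t))); auto.
  - rewrite hb, Cmod_0 by auto. apply rsum_ge0, H0.
Qed.

Lemma Ustar_coord_bound :
  exists c, 0 <= c /\ forall v j, is_l2 v -> Cmod (Ustar b v j) <= c * l2norm v.
Proof.
  destruct b_bounded as [B [HB0 HB]]. exists (1 + B). split; [lra|].
  intros v [|j] Hv; simpl; pose proof (l2norm_ge0 v).
  - pose proof (coord_le_l2norm v O Hv). nra.
  - eapply Rle_trans; [apply Cmod_triangle|]. rewrite Cmod_mult.
    pose proof (coord_le_l2norm v (S j) Hv). pose proof (coord_le_l2norm v j Hv).
    pose proof (HB j). pose proof (Cmod_ge_0 (b j)). pose proof (Cmod_ge_0 (v j)). nra.
Qed.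

Lemma l2_Ustar v : is_l2 v -> is_l2 (Ustar b v).
Proof.
  intros Hv.
  apply (l2_ext (fun j => Cplus (v j) (Cmult (RtoC 1) (Mz (fun p => Cmult (b p) (v p)) j)))).
  - intros [|j]; simpl; ring.
  - apply l2_lin, l2_Mz, (l2_zero_tail _ n); auto.
    intros j Hj. rewrite hb by auto. ring.
Qed.

Lemma fcoord_eq_self g : (forall p, (p < n)%nat -> g p = RtoC 0) -> fcoord b g = g.
Proof.
  intros H. apply functional_extensionality. intros q. induction q; simpl; auto.
  rewrite IHq. destruct (Nat.lt_ge_cases q n).
  - rewrite (H q) by auto. unfold Cminus. ring.
  - rewrite hb by auto. unfold Cminus. ring.
Qed.

Lemma l2_fcoord g : is_l2 g -> is_l2 (fcoord b g).
Proof.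
  apply (l2_eventually_eq _ _ (S n)). intros [|q] Hq; [lia|]. simpl.
  rewrite hb by lia. unfold Cminus. ring.
Qed.

Lemma l2_Sshift a : is_l2 a -> is_l2 (Sshift b a).
Proof. intros H. apply l2_fcoord, l2_Mz, l2_Ustar, H. Qed.

Lemma commutes_of_eq_mult_k X alpha : bounded_op X ->
  (forall m, X (ev m) = mult_k b alpha (ev m)) ->
  forall a, is_l2 a -> X (Sshift b a) = Sshift b (X a).
Proof.
  intros HX Hev.
  assert (HXe : forall w, is_l2 w -> X w = mult_k b alpha w).
  { apply bounded_op_eq_lower_triangular; auto using mult_k_lower_triangular.
    intros g h l j _ _. apply mult_k_lin. }
  intros a Ha. rewrite !HXe by auto using l2_Sshift. apply mult_k_Sshift.
Qed.

Definition defect (alpha : seqC) : op :=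
  fun a j => Cminus (mult_k b alpha a j) (toeplitz alpha a j).

Lemma defect_ev alpha m j :
  defect alpha (ev m) j
  = Cminus (fcoord b (cauchy_prod alpha (fpoly b m)) j) (alpha_idx alpha j m).
Proof. unfold defect, toeplitz. rewrite mult_k_ev, cauchy_ev. reflexivity. Qed.

Lemma defect_ev_ge alpha m j : (n <= m)%nat -> defect alpha (ev m) j = RtoC 0.
Proof.
  intros Hm. unfold defect, toeplitz, mult_k.
  replace (Ustar b (ev m)) with (ev m).
  - rewrite fcoord_eq_self; [unfold Cminus; ring|].
    intros p Hp. rewrite cauchy_ev. unfold alpha_idx.
    destruct (Nat.leb_spec m p); [lia|reflexivity].
  - rewrite Ustar_ev. apply functional_extensionality. intros q. unfold fpoly, ev.
    destruct (Nat.eqb_spec q m), (Nat.eqb_spec q (S m)); auto. symmetry. apply hb. lia.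
Qed.

Lemma defect_lin alpha g h l j :
  defect alpha (fun p => Cplus (g p) (Cmult l (h p))) j
  = Cplus (defect alpha g j) (Cmult l (defect alpha h j)).
Proof. unfold defect, toeplitz. rewrite mult_k_lin, cauchy_lin. unfold Cminus. ring. Qed.

Lemma defect_expand alpha a j :
  defect alpha a j = csum (fun m => Cmult (a m) (defect alpha (ev m) j)) n.
Proof.
  set (K := max n (S j)).
  transitivity (defect alpha (trunc K a) j).
  - unfold defect. rewrite (mult_k_lower_triangular b alpha j a (trunc K a)),
      (toeplitz_lower_triangular alpha j a (trunc K a)); auto;
      intros i Hi; symmetry; apply (trunc_agree K a j); unfold K; lia.
  - rewrite linear_on_l2_trunc by (intros g h l i _ _; apply defect_lin).
    apply csum_zero_tail; [|unfold K; lia].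
    intros m Hm. rewrite defect_ev_ge by auto. ring.
Qed.

Lemma l2_defect_ev alpha m : is_l2 alpha -> is_l2 (defect alpha (ev m)).
Proof.
  intros Ha. apply (l2_ext (fun j => Cplus (mult_k b alpha (ev m) j)
                                  (Cmult (Copp (RtoC 1)) (alpha_idx alpha j m)))).
  - intros j. rewrite defect_ev, mult_k_ev. unfold Cminus. ring.
  - apply l2_lin; [|apply l2_alpha_idx, Ha].
    apply l2_fcoord. unfold mult_k. rewrite Ustar_ev.
    apply (l2_ext (fun j => Cplus (alpha_idx alpha j m) (Cmult (b m) (alpha_idx alpha j (S m))))).
    + intros j. rewrite <- !cauchy_ev, <- cauchy_lin. unfold cauchy_prod.
      apply sum_n_ext. intros i. f_equal. unfold fpoly, ev.
      destruct (Nat.eqb_spec i m), (Nat.eqb_spec i (S m)); try lia; subst; ring.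
    + apply l2_lin; apply l2_alpha_idx, Ha.
Qed.

(** Pointwise [|N a j| <= |a| * sum_(m<n) |N z^m j|], and the right side is square summable. *)
Lemma defect_bounded alpha : is_l2 alpha -> bounded_op (defect alpha).
Proof.
  intros Ha.
  set (f := fun j => rsum (fun m => Cmod (defect alpha (ev m) j)) n).
  assert (Hf : is_l2R f).
  { apply (is_l2R_rsum (fun m j => Cmod (defect alpha (ev m) j))).
    intros m. apply l2_defect_ev, Ha. }
  assert (Hf0 : forall j, 0 <= f j) by (intros; apply rsum_ge0; intros; apply Cmod_ge_0).
  assert (Hbd : forall a, is_l2 a -> forall j, Cmod (defect alpha a j) <= l2norm a * f j).
  { intros a Hal j. rewrite defect_expand. eapply Rle_trans; [apply Cmod_csum_le|].
    apply rsum_Cmod_mult_le. intros m. apply coord_le_l2norm, Hal. }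
  split; [|split].
  - intros a Hal. exact (proj1 (l2norm_le_pointwise _ f _ (Hbd a Hal) (l2norm_ge0 a) Hf0 Hf)).
  - intros a c l _ _. apply functional_extensionality. intros j. apply defect_lin.
  - exists (sqrt (Series (fun j => f j ^ 2))). intros a Hal. rewrite Rmult_comm.
    exact (proj2 (l2norm_le_pointwise _ f _ (Hbd a Hal) (l2norm_ge0 a) Hf0 Hf)).
Qed.

End Truncated.

Definition symbol_of (b : nat -> C) (X : op) : seqC := Ustar b (X (fcoord b (ev O))).

Section Commutant.
Variable n : nat.
Variable b : nat -> C.
Hypothesis hb : forall t : nat, (n <= t)%nat -> b t = RtoC 0.
Variable X : op.
Hypothesis hX : bounded_op X.
Hypothesis HC : forall a : seqC, is_l2 a -> X (Sshift b a) = Sshift b (X a).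

Lemma l2_symbol : is_l2 (symbol_of b X).
Proof. apply (l2_Ustar n b hb), (bounded_op_l2 X hX), (l2_fcoord n b hb), l2_ev. Qed.

(** Both sides commute with [S_n] and agree at [U 1], hence at every [U z^k = S_n^k U 1]. *)
Lemma commuting_eq_mult_k_ev m : X (ev m) = mult_k b (symbol_of b X) (ev m).
Proof.
  set (alpha := symbol_of b X).
  assert (Hk : forall k, X (fcoord b (ev k)) = mult_k b alpha (fcoord b (ev k))).
  { induction k.
    - unfold mult_k. rewrite Ustar_fcoord.
      replace (cauchy_prod alpha (ev O)) with alpha.
      + unfold alpha, symbol_of. now rewrite fcoord_Ustar.
      + apply functional_extensionality. intros j. rewrite cauchy_ev.
        unfold alpha_idx. simpl. now rewrite Nat.sub_0_r.
    - rewrite fcoord_ev_S, HC, IHk, mult_k_Sshift; auto.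
      apply (l2_fcoord n b hb), l2_ev. }
  rewrite (ev_fcoord_decomp b m). apply functional_extensionality. intros j.
  rewrite (bounded_op_linear_on_l2 X hX), mult_k_lin, !Hk; auto;
    apply (l2_fcoord n b hb), l2_ev.
Qed.

Lemma commuting_eq_mult_k w : is_l2 w -> X w = mult_k b (symbol_of b X) w.
Proof.
  apply bounded_op_eq_lower_triangular; auto using mult_k_lower_triangular.
  - intros g h l j _ _. apply mult_k_lin.
  - apply commuting_eq_mult_k_ev.
Qed.

Lemma Ustar_commuting w : is_l2 w ->
  Ustar b (X w) = cauchy_prod (symbol_of b X) (Ustar b w).
Proof. intros Hw. rewrite commuting_eq_mult_k by auto. apply Ustar_mult_k. Qed.

End Commutant.

Lemma is_series_Cmod_le (a : nat -> C) s (f : nat -> R) l :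
  is_series a s -> (forall j, Cmod (a j) <= f j) -> is_series f l -> Cmod s <= l.
Proof.
  intros Ha Hf Hl.
  assert (Hp : forall N, Cmod (sum_n a N) <= sum_n f N).
  { induction N; rewrite ?sum_O, ?sum_Sn; [apply Hf|].
    change (Cmod (Cplus (sum_n a N) (a (S N))) <= sum_n f N + f (S N)).
    eapply Rle_trans; [apply Cmod_triangle|].
    specialize (Hf (S N)). lra. }
  assert (Hn : is_lim_seq (fun N => Cmod (sum_n a N)) (Cmod s)).
  { eapply filterlim_comp; [apply Ha|]. apply (@filterlim_norm C_AbsRing C_NormedModule). }
  exact (is_lim_seq_le _ _ (Cmod s) l Hp Hn Hl).
Qed.

Lemma Cmod_pow_n (z : C) k : Cmod (pow_n z k) = Cmod z ^ k.
Proof.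
  induction k; simpl; [apply Cmod_1|].
  change (mult z (pow_n z k)) with (Cmult z (pow_n z k)). rewrite Cmod_mult, IHk. reflexivity.
Qed.

Section Evaluation.
Variable z : C.

Definition is_sum_at (g : seqC) (s : C) : Prop :=
  is_series (fun j => Cmult (g j) (pow_n z j)) s.

Lemma is_sum_at_unique g s t : is_sum_at g s -> is_sum_at g t -> s = t.
Proof. intros H1 H2. exact (filterlim_locally_unique _ _ _ H1 H2). Qed.

Lemma is_sum_at_ext g h s s' :
  (forall j, g j = h j) -> s = s' -> is_sum_at g s -> is_sum_at h s'.
Proof. intros H <-. apply is_series_ext. intros j. rewrite H. reflexivity. Qed.

Lemma is_sum_at_lin g h s t l : is_sum_at g s -> is_sum_at h t ->
  is_sum_at (fun j => Cplus (g j) (Cmult l (h j))) (Cplus s (Cmult l t)).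
Proof.
  intros H1 H2. eapply is_series_ext; [|exact (is_series_plus _ _ _ _ H1 (is_series_scal l _ _ H2))].
  intros j. change (Cplus (Cmult (g j) (pow_n z j)) (Cmult l (Cmult (h j) (pow_n z j)))
    = Cmult (Cplus (g j) (Cmult l (h j))) (pow_n z j)). ring.
Qed.

Lemma is_sum_at_sub g h s t : is_sum_at g s -> is_sum_at h t ->
  is_sum_at (fun j => Cminus (g j) (h j)) (Cminus s t).
Proof.
  intros H1 H2. eapply is_sum_at_ext; [| |exact (is_sum_at_lin _ _ _ _ (Copp (RtoC 1)) H1 H2)];
    [intros j|]; unfold Cminus; ring.
Qed.

Lemma is_sum_at_zero : is_sum_at (fun _ => RtoC 0) (RtoC 0).
Proof.
  apply (filterlim_ext (fun _ => RtoC 0)); [|apply filterlim_const].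
  intros N. rewrite (sum_n_ext _ (fun _ => zero)) by (intros; apply Cmult_0_l).
  symmetry. apply (sum_n_m_const_zero (G := C_AbelianMonoid)).
Qed.

Lemma is_sum_at_Mz g s : is_sum_at g s -> is_sum_at (Mz g) (Cmult z s).
Proof.
  intros H. apply is_series_decr_1.
  replace (plus _ _) with (scal z s)
    by (change (Cmult z s = Cplus (Cmult z s) (Copp (Cmult (RtoC 0) (RtoC 1)))); ring).
  eapply is_series_ext; [|exact (is_series_scal z _ _ H)].
  intros j. change (Cmult z (Cmult (g j) (pow_n z j)) = Cmult (g j) (Cmult z (pow_n z j))). ring.
Qed.

Lemma is_sum_at_ev k : is_sum_at (ev k) (pow_n z k).
Proof.
  induction k.
  - apply is_series_decr_1.
    replace (plus _ _) with (RtoC 0)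
      by (change (RtoC 0 = Cplus (RtoC 1) (Copp (Cmult (RtoC 1) (RtoC 1)))); ring).
    eapply is_series_ext; [|exact is_sum_at_zero]. intros j. simpl.
    change (Cmult (RtoC 0) (pow_n z j) = Cmult (RtoC 0) (Cmult z (pow_n z j))). ring.
  - eapply is_sum_at_ext; [| |exact (is_sum_at_Mz _ _ IHk)]; [intros [|j]; reflexivity|].
    reflexivity.
Qed.

Lemma is_sum_at_alpha_idx g s k :
  is_sum_at g s -> is_sum_at (fun j => alpha_idx g j k) (Cmult (pow_n z k) s).
Proof.
  intros H. induction k.
  - eapply is_sum_at_ext; [| |exact H].
    + intros j. unfold alpha_idx. simpl. now rewrite Nat.sub_0_r.
    + change (s = Cmult (RtoC 1) s). ring.
  - eapply is_sum_at_ext; [| |exact (is_sum_at_Mz _ _ IHk)]; [intros [|j]; reflexivity|].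
    change (Cmult z (Cmult (pow_n z k) s) = Cmult (Cmult z (pow_n z k)) s). ring.
Qed.

Lemma is_sum_at_trunc h K :
  is_sum_at (trunc K h) (csum (fun m => Cmult (h m) (pow_n z m)) K).
Proof.
  induction K; [exact is_sum_at_zero|]. rewrite trunc_S.
  exact (is_sum_at_lin _ _ _ _ _ IHK (is_sum_at_ev K)).
Qed.

Lemma is_sum_at_cauchy_trunc alpha sa h K : is_sum_at alpha sa ->
  is_sum_at (cauchy_prod alpha (trunc K h)) (Cmult sa (csum (fun m => Cmult (h m) (pow_n z m)) K)).
Proof.
  intros Ha. induction K.
  - eapply is_sum_at_ext; [| |exact is_sum_at_zero]; [|simpl; ring].
    intros j. symmetry. apply (linear_on_l2_zero (toeplitz alpha)).
    intros g h' l i _ _. apply cauchy_lin.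
  - rewrite trunc_S.
    eapply is_sum_at_ext;
      [| |exact (is_sum_at_lin _ _ _ _ (h K) IHK (is_sum_at_alpha_idx _ _ K Ha))].
    + intros j. now rewrite cauchy_lin, cauchy_ev.
    + simpl. ring.
Qed.

Lemma is_sum_at_cauchy_finite alpha sa g L u :
  is_sum_at alpha sa -> (forall j, (L <= j)%nat -> g j = RtoC 0) -> is_sum_at g u ->
  is_sum_at (cauchy_prod alpha g) (Cmult sa u).
Proof.
  intros Ha Hg Hu.
  replace g with (trunc L g) in *.
  - rewrite (is_sum_at_unique _ _ _ Hu (is_sum_at_trunc g L)).
    apply is_sum_at_cauchy_trunc, Ha.
  - apply functional_extensionality. intros j. unfold trunc.
    destruct (Nat.ltb_spec j L); auto. symmetry. auto.
Qed.

Hypothesis Hz : Cmod z < 1.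

Lemma is_sum_at_bounded g A : (forall j, Cmod (g j) <= A) ->
  exists s, is_sum_at g s /\ Cmod s <= A * / (1 - Cmod z).
Proof.
  intros H. pose proof (Cmod_ge_0 z).
  assert (Hgeom : is_series (fun j => A * Cmod z ^ j) (A * / (1 - Cmod z))).
  { apply (@is_series_scal R_AbsRing R_NormedModule), is_series_geom.
    rewrite Rabs_right; lra. }
  assert (Hn : forall j, Cmod (Cmult (g j) (pow_n z j)) <= A * Cmod z ^ j).
  { intros j. rewrite Cmod_mult, Cmod_pow_n.
    apply Rmult_le_compat_r; [apply pow_le; auto|apply H]. }
  destruct (@ex_series_le C_AbsRing C_CompleteNormedModule _ _ Hn (ex_intro _ _ Hgeom))
    as [s Hs].
  exists s. split; [exact Hs|]. exact (is_series_Cmod_le _ _ _ _ Hs Hn Hgeom).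
Qed.

End Evaluation.

Lemma Rle_of_pow_le (x m D : R) : 0 <= m -> (forall k, x ^ k <= D * m ^ k) -> x <= m.
Proof.
  intros Hm H. destruct (Req_dec m 0) as [->|Hm0].
  - specialize (H 1%nat). simpl in H. lra.
  - destruct (Rle_or_lt x m) as [|Hlt]; auto. exfalso.
    assert (Hq : 1 < x / m)
      by (apply (Rmult_lt_reg_r m); [lra|]; unfold Rdiv; rewrite Rmult_assoc, Rinv_l; lra).
    assert (HD : forall k, (x / m) ^ k <= D).
    { intros k. unfold Rdiv. rewrite Rpow_mult_distr.
      apply (Rmult_le_reg_r (m ^ k)); [apply pow_lt; lra|].
      rewrite Rmult_assoc, <- Rpow_mult_distr, Rinv_l, pow1, Rmult_1_r by lra. apply H. }
    pose proof (is_lim_seq_le _ _ p_infty D HD (is_lim_seq_geom_p _ Hq) (is_lim_seq_const D)).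
    exact H0.
Qed.

Fixpoint iter_op (X : op) (k : nat) (v : seqC) : seqC :=
  match k with O => v | S k => X (iter_op X k v) end.

Lemma l2_iter_op X k v : bounded_op X -> is_l2 v -> is_l2 (iter_op X k v).
Proof. intros HX Hv. induction k; simpl; auto. apply bounded_op_l2; auto. Qed.

Lemma l2norm_iter_op X M k v : is_l2 v -> bounded_op X -> 0 <= M ->
  (forall a, is_l2 a -> l2norm (X a) <= M * l2norm a) ->
  l2norm (iter_op X k v) <= M ^ k * l2norm v.
Proof.
  intros Hv HX HM0 HM. induction k; simpl; [lra|].
  eapply Rle_trans; [apply HM, l2_iter_op; auto|].
  rewrite Rmult_assoc. apply Rmult_le_compat_l; auto.
Qed.

Lemma Ustar_trunc_ge b K w j : (S K <= j)%nat -> Ustar b (trunc K w) j = RtoC 0.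
Proof.
  intros Hj. destruct j as [|j]; [lia|]. simpl. unfold trunc.
  destruct (Nat.ltb_spec (S j) K), (Nat.ltb_spec j K); try lia. ring.
Qed.

Lemma is_sum_at_Ustar_bounded n b z : (forall t, (n <= t)%nat -> b t = RtoC 0) -> Cmod z < 1 ->
  exists c, 0 <= c /\ forall v, is_l2 v ->
    exists s, is_sum_at z (Ustar b v) s /\ Cmod s <= c * l2norm v.
Proof.
  intros hb Hz. destruct (Ustar_coord_bound n b hb) as [c [Hc HcU]].
  assert (Hz' : 0 < / (1 - Cmod z)) by (apply Rinv_0_lt_compat; lra).
  exists (c * / (1 - Cmod z)). split; [apply Rmult_le_pos; lra|].
  intros v Hv. destruct (is_sum_at_bounded z Hz (Ustar b v) (c * l2norm v)) as [s [Hs Hb]].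
  - intros j. apply HcU, Hv.
  - exists s. split; [exact Hs|]. lra.
Qed.

Section SymbolBounded.
Variable n : nat.
Variable b : nat -> C.
Hypothesis hb : forall t : nat, (n <= t)%nat -> b t = RtoC 0.
Variable X : op.
Hypothesis hX : bounded_op X.
Hypothesis HC : forall a : seqC, is_l2 a -> X (Sshift b a) = Sshift b (X a).
Variable M : R.
Hypothesis HM0 : 0 <= M.
Hypothesis HM : forall a, is_l2 a -> l2norm (X a) <= M * l2norm a.
Variable z : C.
Variable c : R.
Hypothesis Hc : 0 <= c.
Hypothesis HU : forall v, is_l2 v -> exists s, is_sum_at z (Ustar b v) s /\ Cmod s <= c * l2norm v.
Variable sa : C.
Hypothesis Hsa : is_sum_at z (symbol_of b X) sa.

Lemma is_sum_at_Ustar_commuting_trunc K w u : is_sum_at z (Ustar b (trunc K w)) u ->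
  is_sum_at z (Ustar b (X (trunc K w))) (Cmult sa u).
Proof.
  intros Hu. rewrite (Ustar_commuting n b hb X hX HC) by apply l2_trunc.
  apply (is_sum_at_cauchy_finite z _ _ _ (S K)); auto. intros j. apply Ustar_trunc_ge.
Qed.

(** Evaluation at [z] intertwines [U^* X U] with multiplication by [phi(z)]: this holds on
    finitely supported vectors, and both sides are bounded functionals. *)
Lemma is_sum_at_Ustar_commuting w t u : is_l2 w ->
  is_sum_at z (Ustar b (X w)) t -> is_sum_at z (Ustar b w) u -> t = Cmult sa u.
Proof.
  intros Hw Ht Hu.
  enough (Cminus t (Cmult sa u) = RtoC 0) as Hd.
  { transitivity (Cplus (Cminus t (Cmult sa u)) (Cmult sa u)); [unfold Cminus; ring|].
    rewrite Hd. ring. }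
  pose proof (Cmod_ge_0 sa).
  apply (eq0_of_le_l2norm_tail _ (c * (M + Cmod sa)) w O Hw); [apply Rmult_le_pos; lra|].
  intros K _.
  assert (HwK : is_l2 (tail K w)) by (apply l2_tail, Hw).
  destruct (HU (X (tail K w))) as [e1 [He1 Hb1]]; [apply bounded_op_l2; auto|].
  destruct (HU (tail K w)) as [e2 [He2 Hb2]]; [exact HwK|].
  assert (Hu' : is_sum_at z (Ustar b (trunc K w)) (Cminus u e2)).
  { eapply is_sum_at_ext; [| |exact (is_sum_at_sub _ _ _ _ _ Hu He2)]; [|reflexivity].
    intros j. symmetry. apply Ustar_sub. apply trunc_add_tail. }
  assert (Ht' : is_sum_at z (Ustar b (X (trunc K w))) (Cminus t e1)).
  { eapply is_sum_at_ext; [| |exact (is_sum_at_sub _ _ _ _ _ Ht He1)]; [|reflexivity].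
    intros j. symmetry. apply Ustar_sub. intros i. apply bounded_op_trunc_add_tail; auto. }
  pose proof (is_sum_at_unique _ _ _ _ Ht' (is_sum_at_Ustar_commuting_trunc _ _ _ Hu')) as E.
  replace (Cminus t (Cmult sa u)) with (Cminus e1 (Cmult sa e2)).
  2:{ symmetry. transitivity (Cplus (Cminus t e1) (Cminus e1 (Cmult sa u)));
      [|rewrite E]; unfold Cminus; ring. }
  unfold Cminus. eapply Rle_trans; [apply Cmod_triangle|].
  rewrite Cmod_opp, Cmod_mult.
  pose proof (l2norm_ge0 (tail K w)).
  pose proof (Rmult_le_compat_l _ _ _ Hc (HM _ HwK)).
  pose proof (Rmult_le_compat_l _ _ _ (Cmod_ge_0 sa) Hb2).
  nra.
Qed.

Lemma is_sum_at_iter k :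
  is_sum_at z (Ustar b (iter_op X k (fcoord b (ev O)))) (pow_n sa k).
Proof.
  assert (Hv : is_l2 (fcoord b (ev O))) by apply (l2_fcoord n b hb), l2_ev.
  induction k.
  - simpl. rewrite Ustar_fcoord. apply is_sum_at_ev.
  - destruct (HU (X (iter_op X k (fcoord b (ev O))))) as [t [Ht _]].
    { apply bounded_op_l2, l2_iter_op; auto. }
    rewrite (is_sum_at_Ustar_commuting _ _ _ (l2_iter_op X k _ hX Hv) Ht IHk) in Ht.
    exact Ht.
Qed.

(** Because [|phi(z)|^k <= c |X|^k |U 1|] for every [k]. *)
Lemma symbol_value_le : Cmod sa <= M.
Proof.
  set (v := fcoord b (ev O)).
  assert (Hv : is_l2 v) by apply (l2_fcoord n b hb), l2_ev.
  apply (Rle_of_pow_le _ _ (c * l2norm v) HM0). intros k.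
  destruct (HU (iter_op X k v)) as [s [Hs Hb]]; [apply l2_iter_op; auto|].
  rewrite (is_sum_at_unique _ _ _ _ Hs (is_sum_at_iter k)), Cmod_pow_n in Hb.
  eapply Rle_trans; [exact Hb|].
  replace (c * l2norm v * M ^ k) with (c * (M ^ k * l2norm v)) by ring.
  apply Rmult_le_compat_l, l2norm_iter_op; auto.
Qed.

End SymbolBounded.

Lemma Hinf_symbol n b X : (forall t, (n <= t)%nat -> b t = RtoC 0) -> bounded_op X ->
  (forall a, is_l2 a -> X (Sshift b a) = Sshift b (X a)) -> Hinf (symbol_of b X).
Proof.
  intros hb hX HC.
  destruct (bounded_op_norm X hX) as [M [HM0 HM]].
  exists M. intros z Hz.
  destruct (is_sum_at_Ustar_bounded n b z hb Hz) as [c [Hc HU]].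
  destruct (HU (X (fcoord b (ev O)))) as [s [Hs _]].
  { apply (bounded_op_l2 X hX), (l2_fcoord n b hb), l2_ev. }
  exists s. split; [exact Hs|].
  exact (symbol_value_le n b hb X hX HC M HM0 HM z c Hc HU s Hs).
Qed.

Theorem theorem4p5 (n : nat) (hn : (1 <= n)%nat) (b : nat -> C)
    (hb : forall t : nat, (n <= t)%nat -> b t = RtoC 0)
    (X : op) (hX : bounded_op X) :
  (forall a : seqC, is_l2 a -> X (Sshift b a) = Sshift b (X a)) <->
  (exists alpha : seqC, Hinf alpha /\
     exists N : op, bounded_op N /\
       (forall m j : nat,
          N (ev m) j = Cminus (fcoord b (cauchy_prod alpha (fpoly b m)) j) (alpha_idx alpha j m)) /\
       (forall a : seqC, is_l2 a ->
          X a = (fun j => Cplus (toeplitz alpha a j) (N a j)))).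
Proof.
  split.
  - intros HC. exists (symbol_of b X).
    split; [exact (Hinf_symbol n b X hb hX HC)|].
    exists (defect b (symbol_of b X)). split; [|split].
    + exact (defect_bounded n b hb _ (l2_symbol n b hb X hX)).
    + apply defect_ev.
    + intros a Ha. rewrite (commuting_eq_mult_k n b hb X hX HC a Ha).
      apply functional_extensionality. intros j. unfold defect, Cminus. ring.
  - intros [alpha [_ [N [_ [HN HX]]]]].
    apply (commutes_of_eq_mult_k n b hb X alpha hX). intros m.
    rewrite HX by apply l2_ev. apply functional_extensionality. intros j.
    rewrite HN, mult_k_ev. unfold toeplitz. rewrite cauchy_ev. unfold Cminus. ring.
Qed.
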